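(* Let $\omega=t_1\pi_1+\dots+t_m\pi_m$ be a formal real linear combination of $k$-permutations. If $\sum_{i\in[m]}t_iP_{\pi_i}=0$, then the cover matrix $\mathrm{Cov}(\omega)$ is constant (all its entries are equal).
   Context: A $k$-permutation is a bijection of $[k]=\{1,\dots,k\}$. The gradient polynomial of a $k$-permutation $\pi$ is $P_\pi(\alpha,\beta)=k!\sum_{m\in[k]}\left(\frac{k-m}{1-\alpha}-\frac{m-1}{\alpha}\right)\left(\frac{k-\pi(m)}{1-\beta}-\frac{\pi(m)-1}{\beta}\right)\frac{\alpha^{m-1}(1-\alpha)^{k-m}\beta^{\pi(m)-1}(1-\beta)^{k-\pi(m)}}{(m-1)!(k-m)!(\pi(m)-1)!(k-\pi(m))!}$. The permutation matrix $A_\pi\in\mathbb{R}^{k\times k}$ has $(A_\pi)_{i,j}=1$ if $\pi(i)=j$ and $0$ otherwise, and the cover matrix of $\omega=\sum_i t_i\pi_i$ is $\mathrm{Cov}(\omega)=\sum_i t_iA_{\pi_i}$. *)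

From HB Require Import structures.
From mathcomp Require Import all_boot all_order all_algebra all_fingroup.
From mathcomp Require Import reals.
Set Implicit Arguments. Unset Strict Implicit. Unset Printing Implicit Defensive.
Import Order.TTheory GRing.Theory Num.Theory.
Local Open Scope ring_scope.

(* k-permutations are elements of 'S_k (permutations of 'I_k = {0,...,k-1});
   the paper's index m in [k] corresponds to i : 'I_k with m = i + 1, and
   pi(m) corresponds to (pi i) + 1. *)

(* Gradient polynomial P_pi(alpha, beta), written literally as in the paper. *)
Definition gradP (R : realType) (k : nat) (pi : 'S_k) (a b : R) : R :=
  (k`!)%:R * \sum_(i < k)
    (((k - i.+1)%:R / (1 - a) - (i.+1 - 1)%:R / a) *
     ((k - (pi i).+1)%:R / (1 - b) - ((pi i).+1 - 1)%:R / b) *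
     (a ^+ (i.+1 - 1) * (1 - a) ^+ (k - i.+1) *
      b ^+ ((pi i).+1 - 1) * (1 - b) ^+ (k - (pi i).+1)) /
     ((i.+1 - 1)`!%:R * (k - i.+1)`!%:R *
      ((pi i).+1 - 1)`!%:R * (k - (pi i).+1)`!%:R)).

Definition permMx (R : realType) (k : nat) (pi : 'S_k) : 'M[R]_k :=
  \matrix_(i < k, j < k) (if pi i == j then 1 else 0).

Definition coverMx (R : realType) (k m : nat) (t : 'I_m -> R) (pis : 'I_m -> 'S_k)
  : 'M[R]_k := \sum_(l < m) t l *: @permMx R k (pis l).

From HB Require Import structures.
From mathcomp Require Import all_boot all_order all_algebra all_fingroup.
From mathcomp Require Import reals.
From mathcomp Require Import ring lra.
Set Implicit Arguments. Unset Strict Implicit. Unset Printing Implicit Defensive.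
Import Order.TTheory GRing.Theory Num.Theory.
Local Open Scope ring_scope.

(* Write beta_i for the normalized Bernstein polynomial
   a^i (1 - a)^(n - i) / (i! (n - i)!) of degree n = k - 1.  Then
   P_pi(a, b) = k! sum_i beta_i'(a) beta_(pi i)'(b), hence
   sum_l t_l P_(pi_l)(a, b) = k! sum_(p,q) Cov(omega)_(p,q) beta_p'(a) beta_q'(b).
   Up to sign, sum_i c_i beta_i' = sum_i (c_i - c_(i+1)) beta_i^(n-1), and the
   Bernstein polynomials of degree n - 1 are linearly independent, so the only
   linear relations among the beta_i' have constant coefficients.  Used first
   in a and then in b, this shows that the difference of any two rows of
   Cov(omega) is a constant vector; since every row and column sum of
   Cov(omega) equals sum_l t_l, Cov(omega) is constant. *)

Section Bernstein.
Variable R : realFieldType.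
Implicit Types (a b x : R) (n i : nat).

Definition bern n i a : R :=
  a ^+ i * (1 - a) ^+ (n - i) / (i`!%:R * (n - i)`!%:R).

(* On (0, 1) this is minus the derivative of [bern n i]. *)
Definition dbern n i a : R := ((n - i)%:R / (1 - a) - i%:R / a) * bern n i a.

Lemma natr_fact_neq0 n : (n`!%:R : R) != 0.
Proof. by rewrite pnatr_eq0 -lt0n fact_gt0. Qed.

Lemma bern_free n (e : nat -> R) :
  (forall a, 0 < a < 1 -> \sum_(i < n.+1) e i * bern n i a = 0) ->
  forall i, (i <= n)%N -> e i = 0.
Proof.
move=> e_bern0 i le_in.
pose P := \poly_(i < n.+1) (e i / (i`!%:R * (n - i)`!%:R)).
(* Substituting a = x / (1 + x) turns the Bernstein sum into P.[x] / (1 + x) ^+ n. *)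
have P_pos0 x : 0 < x -> P.[x] = 0.
  move=> x_gt0; have x1_gt0 : 0 < 1 + x by lra.
  have x1_neq0 : 1 + x != 0 by rewrite gt_eqF.
  have a01 : 0 < x / (1 + x) < 1 by rewrite divr_gt0 //= ltr_pdivrMr // mul1r; lra.
  have := e_bern0 _ a01.
  rewrite (eq_bigr (fun i : 'I_n.+1 =>
             e i / (i`!%:R * (n - i)`!%:R) * x ^+ i / (1 + x) ^+ n)).
    rewrite -mulr_suml /P horner_poly => /eqP.
    by rewrite mulf_eq0 invr_eq0 expf_eq0 (negbTE x1_neq0) andbF orbF => /eqP.
  move=> j _; have le_jn : (j <= n)%N by rewrite -ltnS.
  rewrite /bern; have -> : 1 - x / (1 + x) = (1 + x)^-1 by field.
  rewrite expr_div_n -exprVn -[x ^+ j * _ * _]mulrA -exprD subnKC // exprVn.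
  by field; rewrite ?expf_neq0 ?mulf_neq0 ?natr_fact_neq0.
have P0 : P = 0.
  apply: (@roots_geq_poly_eq0 _ P [seq j.+1%:R | j <- iota 0 n.+1]).
  - by apply/allP => y /mapP [j _ ->]; apply/eqP/P_pos0; rewrite ltr0Sn.
  - by rewrite map_inj_uniq ?iota_uniq // => u v /eqP; rewrite eqr_nat eqSS => /eqP.
  - by rewrite size_map size_iota size_poly.
have /eqP := congr1 (fun p : {poly R} => p`_i) P0.
rewrite coef_poly coef0 ltnS le_in mulf_eq0 invr_eq0 mulf_eq0.
by rewrite !(negbTE (natr_fact_neq0 _)) !orbF => /eqP.
Qed.

Lemma bernSl n i a : 1 - a != 0 -> (i <= n)%N ->
  (n.+1 - i)%:R / (1 - a) * bern n.+1 i a = bern n i a.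
Proof.
move=> a_neq1 le_in; rewrite /bern subSn // factS exprS natrM.
by field; rewrite !natr_fact_neq0 nat1r pnatr_eq0 a_neq1.
Qed.

Lemma bernSr n i a : a != 0 -> (i <= n)%N ->
  i.+1%:R / a * bern n.+1 i.+1 a = bern n i a.
Proof.
move=> a_neq0 le_in; rewrite /bern subSS factS exprS natrM.
by field; rewrite !natr_fact_neq0 nat1r pnatr_eq0 a_neq0.
Qed.

Lemma sum_dbern n (c : nat -> R) a : a != 0 -> 1 - a != 0 ->
  \sum_(i < n.+2) c i * dbern n.+1 i a = \sum_(i < n.+1) (c i - c i.+1) * bern n i a.
Proof.
move=> a_neq0 a_neq1.
under eq_bigr do rewrite /dbern mulrBl mulrBr.
rewrite sumrB [X in X - _]big_ord_recr [X in _ - X]big_ord_recl /=.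
rewrite subnn !mul0r mulr0 addr0 mulr0 add0r.
rewrite -sumrB; apply: eq_bigr => i _; have le_in : (i <= n)%N by rewrite -ltnS.
by rewrite /bump /= add1n bernSl // bernSr // mulrBl.
Qed.

Lemma dbern_kernel n (c : 'I_n.+1 -> R) :
  (forall a, 0 < a < 1 -> \sum_i c i * dbern n i a = 0) -> forall i j : 'I_n.+1, c i = c j.
Proof.
case: n c => [|n] c c_dbern0 i j; first by rewrite !ord1.
pose c' p := c (inord p).
have c'_step p : (p <= n)%N -> c' p = c' p.+1.
  move=> le_pn; apply: subr0_eq; move: p le_pn.
  apply: (@bern_free n (fun p => c' p - c' p.+1)) => a a01.
  have a_neq0 : a != 0 by rewrite gt_eqF //; case/andP: a01.
  have a_neq1 : 1 - a != 0 by rewrite subr_eq0 eq_sym lt_eqF //; case/andP: a01.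
  rewrite -(sum_dbern _ c') // -[RHS](c_dbern0 a a01).
  by apply: eq_bigr => p _; rewrite /c' inord_val.
have c'_const p : (p <= n.+1)%N -> c' p = c' 0.
  by elim: p => [|p IHp] // lt_pn; rewrite -c'_step -1?ltnS // IHp // ltnW.
by rewrite -[i]inord_val -[j]inord_val -/(c' i) -/(c' j) !c'_const // -ltnS.
Qed.

Lemma dbern2_kernel n (A : 'M[R]_n.+1) :
  (forall a b, 0 < a < 1 -> 0 < b < 1 ->
     \sum_p \sum_q A p q * (dbern n p a * dbern n q b) = 0) ->
  forall p p' q q', A p q - A p' q = A p q' - A p' q'.
Proof.
move=> A_dbern0 p p'.
have rows_eq p1 p2 b : 0 < b < 1 ->
    \sum_q A p1 q * dbern n q b = \sum_q A p2 q * dbern n q b.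
  move=> b01; apply: (@dbern_kernel n (fun p => \sum_q A p q * dbern n q b)) => a a01.
  rewrite -[RHS](A_dbern0 a b a01 b01); apply: eq_bigr => i _.
  by rewrite mulr_suml; apply: eq_bigr => j _; rewrite mulrAC mulrA.
apply: (@dbern_kernel n (fun q => A p q - A p' q)) => b b01.
under eq_bigr do rewrite mulrBl.
by rewrite sumrB (rows_eq p p') ?subrr.
Qed.

End Bernstein.

Lemma mx_const_of_margins (R : numDomainType) m n (A : 'M[R]_(m, n)) :
  (forall i i' j j', A i j - A i' j = A i j' - A i' j') ->
  (forall i i', \sum_j A i j = \sum_j A i' j) ->
  (forall j j', \sum_i A i j = \sum_i A i j') ->
  forall i j i' j', A i j = A i' j'.
Proof.
move=> row_diff rows cols i j i' j'.
have n_gt0 : (0 < n)%N := leq_ltn_trans (leq0n j) (ltn_ord j).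
have m_gt0 : (0 < m)%N := leq_ltn_trans (leq0n i) (ltn_ord i).
have cols_const i1 i2 j0 : A i1 j0 = A i2 j0.
  apply/eqP; rewrite -subr_eq0; apply/eqP/(pmulrnI n_gt0).
  rewrite mul0rn -[n in _ *+ n]card_ord -sumr_const.
  by rewrite (eq_bigr _ (fun j1 _ => row_diff i1 i2 j0 j1)) sumrB (rows i1 i2) subrr.
have sum_col j0 : \sum_i1 A i1 j0 = A i j0 *+ m.
  by rewrite -[m in _ *+ m]card_ord -sumr_const; apply: eq_bigr => i1 _; apply: cols_const.
by rewrite (cols_const i' i); apply: (pmulrnI m_gt0); rewrite -!sum_col; exact: cols.
Qed.

Section CoverMatrix.
Variables (R : realType) (k m : nat) (t : 'I_m -> R) (pis : 'I_m -> 'S_k).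

Lemma sum_permMx_row (pi : 'S_k) i (f : 'I_k -> R) :
  \sum_j @permMx R k pi i j * f j = f (pi i).
Proof.
rewrite (bigD1 (pi i)) //= big1 ?mxE ?eqxx ?mul1r ?addr0 // => j.
by rewrite mxE eq_sym => /negbTE ->; rewrite mul0r.
Qed.

Lemma sum_permMx_col (pi : 'S_k) j : \sum_i @permMx R k pi i j = 1 :> R.
Proof.
rewrite (bigD1 ((pi^-1)%g j)) //= big1 ?mxE ?permKV ?eqxx ?addr0 // => i.
by rewrite mxE (canF_eq (permK pi)) => /negbTE ->.
Qed.

Lemma coverMxE i j : coverMx t pis i j = \sum_l t l * @permMx R k (pis l) i j.
Proof. by rewrite summxE; apply: eq_bigr => l _; rewrite mxE. Qed.

Lemma sum_coverMx_row i : \sum_j coverMx t pis i j = \sum_l t l.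
Proof.
under eq_bigr do rewrite coverMxE.
rewrite exchange_big; apply: eq_bigr => l _.
by rewrite -mulr_sumr (eq_bigr _ (fun j _ => esym (mulr1 _))) sum_permMx_row mulr1.
Qed.

Lemma sum_coverMx_col j : \sum_i coverMx t pis i j = \sum_l t l.
Proof.
under eq_bigr do rewrite coverMxE.
by rewrite exchange_big; apply: eq_bigr => l _; rewrite -mulr_sumr sum_permMx_col mulr1.
Qed.

Lemma sum_coverMx_bilinear (f g : 'I_k -> R) :
  \sum_i \sum_j coverMx t pis i j * (f i * g j) =
  \sum_l t l * \sum_i f i * g (pis l i).
Proof.
under eq_bigr => i _ do under eq_bigr do rewrite coverMxE mulr_suml.
under eq_bigr do rewrite exchange_big.
rewrite exchange_big; apply: eq_bigr => l _; rewrite mulr_sumr.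
by apply: eq_bigr => i _; under eq_bigr do rewrite -mulrA; rewrite -mulr_sumr sum_permMx_row.
Qed.

End CoverMatrix.

Lemma gradP_dbern (R : realType) n (pi : 'S_n.+1) (a b : R) :
  gradP pi a b = (n.+1)`!%:R * \sum_(i < n.+1) dbern n i a * dbern n (pi i) b.
Proof.
rewrite /gradP /dbern /bern; congr (_ * _); apply: eq_bigr => i _.
by rewrite !subSS !subn0 !invfM; ring.
Qed.

Theorem lemma10 (R : realType) (k m : nat) (t : 'I_m -> R) (pis : 'I_m -> 'S_k) :
  (forall a b : R, 0 < a < 1 -> 0 < b < 1 ->
     \sum_(l < m) t l * @gradP R k (pis l) a b = 0) ->
  forall i j i' j' : 'I_k, coverMx t pis i j = coverMx t pis i' j'.
Proof.
case: k pis => [|n] pis gradP0 i; first by case: i.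
apply: mx_const_of_margins i; last 2 first.
- by move=> i i'; rewrite !sum_coverMx_row.
- by move=> j j'; rewrite !sum_coverMx_col.
apply: dbern2_kernel => a b a01 b01.
rewrite (sum_coverMx_bilinear t pis (fun p => dbern n p a) (fun q => dbern n q b)).
have /eqP := gradP0 a b a01 b01.
under eq_bigr do rewrite gradP_dbern mulrCA.
by rewrite -mulr_sumr mulf_eq0 (negbTE (natr_fact_neq0 _ _)) => /eqP.
Qed.
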